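(* For every $\lambda\in\mathscr{SP}(n)$, the minimal length representative of the coset $v(\lambda)W_P$ equals $u_{\lambda^*}$.
   Context: $W_{\mathrm{af}}$ is the affine Weyl group of type $C_n^{(1)}$ generated by $s_0,\dots,s_n$; $W=\langle s_1,\dots,s_n\rangle$ acts on $X^\vee=\bigoplus_{i=1}^n\mathbb{Z}\varepsilon_i$ ($s_i$ swaps $\varepsilon_i,\varepsilon_{i+1}$ for $i<n$; $s_n$ negates $\varepsilon_n$); $Q^\vee$ the coroot lattice spanned by $\varepsilon_i-\varepsilon_{i+1}$ and $\varepsilon_n$; $W_{\mathrm{af}}\cong W\ltimes Q^\vee$ (elements $wt_\xi$, $wt_\xi w^{-1}=t_{w\xi}$), $s_0=s_\theta t_{-\varepsilon_1}$ with $s_\theta=s_1\cdots s_{n-1}s_ns_{n-1}\cdots s_1$. $W_P=\langle s_1,\dots,s_{n-1}\rangle$. $\rho_i=s_{i-1}\cdots s_1s_0$ for $1\le i\le n$. $\mathscr{SP}(n)$ is the set of strict partitions $\lambda=(\lambda_1>\dots>\lambda_l>0)$ with $\lambda_1\le n$; $x_\lambda=\rho_{\lambda_l}\cdots\rho_{\lambda_1}$, and $v(\lambda)\in W$ is defined by $x_\lambda=v(\lambda)t_{-\xi}$ for some $\xi\in Q^\vee$. For $1\le k\le n$, $u_k=s_{n+1-k}\cdots s_{n-1}s_n$, and $u_\lambda=u_{\lambda_l}\cdots u_{\lambda_1}$. $\lambda^*=(n+1-\lambda_l,\dots,n+1-\lambda_1)$. *)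

From HB Require Import structures.
From mathcomp Require Import all_boot all_order all_algebra.
Set Implicit Arguments. Unset Strict Implicit. Unset Printing Implicit Defensive.
Import GRing.Theory Num.Theory.
Local Open Scope ring_scope.

(* Conventions: X^vee = Z^n as column vectors 'cV[int]_n; the 0-based index
   a : 'I_n stands for epsilon_(a+1).  Elements of W are represented by the
   integer n x n matrices of their action on X^vee (columns = images of the
   basis vectors).  Q^vee = Z^n (it is spanned by eps_i - eps_(i+1), eps_n). *)

Definition swapn (i b : nat) : nat :=
  if b == i.-1 then i else if b == i then i.-1 else b.

Definition sgen (n i : nat) : 'M[int]_n :=
  \matrix_(a < n, b < n)
    (if (0 < i < n)%N then (nat_of_bool ((a : nat) == swapn i b))%:Z
     else if i == n then
       (if a == b then (if (a : nat) == n.-1 then -1 else 1) else 0)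
     else (nat_of_bool (a == b))%:Z).

Definition wprod (n : nat) (ws : seq nat) : 'M[int]_n :=
  foldr (fun i acc => sgen n i *m acc) 1%:M ws.

Definition s_theta (n : nat) : 'M[int]_n :=
  wprod n (iota 1 n ++ rev (iota 1 n.-1)).

(* W_af = W |x Q^vee: the pair (w, xi) stands for w t_xi.
   (w t_xi)(v t_eta) = w v t_(v^-1 xi + eta), since t_xi v = v t_(v^-1 xi). *)
Definition afel (n : nat) := ('M[int]_n * 'cV[int]_n)%type.

Definition afmul (n : nat) (x y : afel n) : afel n :=
  (x.1 *m y.1, invmx y.1 *m x.2 + y.2).

Definition afone (n : nat) : afel n := (1%:M, 0).

Definition eps1 (n : nat) : 'cV[int]_n :=
  \col_(a < n) (if (a : nat) == 0%N then 1 else 0).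

Definition afgen (n i : nat) : afel n :=
  if i == 0%N then (s_theta n, - eps1 n) else (sgen n i, 0).

Definition afprod (n : nat) (ws : seq nat) : afel n :=
  foldr (fun i acc => afmul (afgen n i) acc) (afone n) ws.

Definition rho (n i : nat) : afel n := afprod n (rev (iota 0 i)).

Definition strict_part (n : nat) (lam : seq nat) : bool :=
  sorted (fun x y => y < x)%N lam && all (fun k => 0 < k <= n)%N lam.

Definition x_lam (n : nat) (lam : seq nat) : afel n :=
  foldl (fun acc k => afmul (rho n k) acc) (afone n) lam.

(* v(lambda): x_lambda = v(lambda) t_(-xi) *)
Definition v_lam (n : nat) (lam : seq nat) : 'M[int]_n := (x_lam n lam).1.

Definition u_k (n k : nat) : 'M[int]_n := wprod n (iota (n.+1 - k) k).

Definition u_lam (n : nat) (lam : seq nat) : 'M[int]_n :=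
  foldl (fun acc k => u_k n k *m acc) 1%:M lam.

Definition lam_star (n : nat) (lam : seq nat) : seq nat :=
  map (fun k => n.+1 - k)%N (rev lam).

Definition W_word (n : nat) (ws : seq nat) : bool := all (fun i => 0 < i <= n)%N ws.

Definition length_W (n : nat) (w : 'M[int]_n) (k : nat) : Prop :=
  (exists2 ws, W_word n ws & (size ws = k /\ wprod n ws = w)) /\
  (forall ws, W_word n ws -> wprod n ws = w -> (k <= size ws)%N).

Definition in_coset_WP (n : nat) (v w : 'M[int]_n) : Prop :=
  exists2 ws, all (fun i => 0 < i < n)%N ws & w = v *m wprod n ws.

Definition min_coset_rep (n : nat) (v u : 'M[int]_n) : Prop :=
  in_coset_WP v u /\ (exists k, length_W u k) /\
  forall w, in_coset_WP v w -> w <> u ->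
    forall lu lw, length_W u lu -> length_W w lw -> (lu < lw)%N.

From mathcomp Require Import all_boot all_order all_algebra.
From mathcomp Require Import zify.
From Stdlib Require Import Classical_Prop Wf_nat.
Set Implicit Arguments. Unset Strict Implicit. Unset Printing Implicit Defensive.
Import GRing.Theory Num.Theory.

(* Elements of W are signed permutation matrices, described by the signed
   rows (-1)^s eps_r of their columns.  Right multiplication by W_P permutes
   the columns without changing the set of signed rows, and any two elements
   with the same set of signed rows differ by such a permutation.  Ordering
   signed rows by -eps_1 < ... < -eps_n < eps_n < ... < eps_1, each coset
   v W_P thus contains exactly one element whose columns are decreasing.
   The number of inversions of this order among the columns, plus n + 1 - r
   for each negative row r, grows by at most one under each generator s_i, so it
   bounds the length from below.  Both v(lambda) and u_(lambda^* ) have the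
   negative rows lambda_1, ..., lambda_l; u_(lambda^* ) has decreasing
   columns and is given by a word whose length is exactly its negative
   weight, while every other element of the coset has the same weight and
   at least one inversion. *)

(* Split on every innermost conditional and every test [a == b] between
   naturals, then close each case by linear arithmetic. *)
Ltac case_lia := rewrite ?/swapn; repeat match goal with |- context[if ?b then _ else _] =>
  lazymatch b with context[if _ then _ else _] => fail | _ => idtac end;
  let H := fresh "H" in case H: b end;
  repeat match goal with |- context[(?a == ?b :> nat)] =>
  lazymatch a with context[if _ then _ else _] => fail | _ => idtac end;
  lazymatch b with context[if _ then _ else _] => fail | _ => idtac end;
  let H := fresh "H" in case H: (a == b) end;
  rewrite ?addbT ?addbF /=; try (congr (_, _)); try lia.

(* (s, r) stands for the signed basis vector (-1)^s eps_(r+1). *)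
Definition sidx := (bool * nat)%type.

Definition flip (x : sidx) : sidx := (~~ x.1, x.2).

Section SignedPermutationMatrices.
Variable n : nat.

Definition sgen_act (i : nat) (x : sidx) : sidx :=
  if (0 < i < n)%N then (x.1, swapn i x.2)
  else if i == n then (x.1 (+) (x.2 == n.-1), x.2) else x.

Definition word_act (ws : seq nat) (x : sidx) : sidx := foldr sgen_act x ws.

Definition word_col (ws : seq nat) (b : nat) : sidx := word_act ws (false, b).

Definition spmx (A : sidx -> sidx) : 'M[int]_n :=
  \matrix_(a < n, b < n)
    (if (a : nat) == (A (false, b : nat)).2 then (-1) ^+ (A (false, b : nat)).1 else 0)%R.

Lemma sgen_act_row_lt i x : (x.2 < n)%N -> ((sgen_act i x).2 < n)%N.
Proof. rewrite /sgen_act; case: ifP => [/andP[? ?] ?|_ ?] /=; [case_lia | by case: ifP]. Qed.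

Lemma word_act_row_lt ws x : (x.2 < n)%N -> ((word_act ws x).2 < n)%N.
Proof. by elim: ws => [|i ws IH] //= /IH /sgen_act_row_lt. Qed.

Lemma sgen_act_flip i x : sgen_act i (flip x) = flip (sgen_act i x).
Proof. by rewrite /sgen_act /flip /=; case: ifP => // _; case: ifP => //= _; rewrite addNb. Qed.

Lemma word_act_cat ws1 ws2 x : word_act (ws1 ++ ws2) x = word_act ws1 (word_act ws2 x).
Proof. exact: foldr_cat. Qed.

Lemma sgen_act_lt_n i x : (0 < i < n)%N -> sgen_act i x = (x.1, swapn i x.2).
Proof. by rewrite /sgen_act => ->. Qed.

Lemma sgen_act_n x : sgen_act n x = (x.1 (+) (x.2 == n.-1), x.2).
Proof. by rewrite /sgen_act eqxx ltnn andbF. Qed.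

Lemma eq_spmx A B : (forall b, (b < n)%N -> A (false, b) = B (false, b)) -> spmx A = spmx B.
Proof. by move=> eAB; apply/matrixP => a b; rewrite !mxE eAB. Qed.

Lemma spmx_id : spmx id = 1%:M%R.
Proof. by apply/matrixP => a b; rewrite !mxE /= -(inj_eq val_inj); case: eqP. Qed.

Lemma sgen_spmx i : sgen n i = spmx (sgen_act i).
Proof.
apply/matrixP => a b; rewrite !mxE /sgen_act -(inj_eq val_inj) /=.
case: ifP => _ /=; first by case: eqP.
by case: ifP => _ /=; case: eqP => // ->; case: (_ == _).
Qed.

Lemma mul_spmx A B :
  (forall b, (b < n)%N -> ((B (false, b)).2 < n)%N) ->
  (forall x, A (flip x) = flip (A x)) ->
  (spmx A *m spmx B)%R = spmx (A \o B).
Proof.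
move=> B_lt A_flip; apply/matrixP => a b; rewrite !mxE /=.
rewrite (bigD1 (Ordinal (B_lt _ (ltn_ord b)))) //= big1 ?addr0; last first.
  move=> c ncB; rewrite [X in (_ * X)%R]mxE ifF ?mulr0 //.
  by apply: contraNF ncB => /eqP eB; apply/eqP/val_inj.
rewrite !mxE /= eqxx; case: (B _) => [[] r] /=; last by rewrite mulr1.
rewrite -[(true, r)]/(flip (false, r)) A_flip /=.
by case: eqP; rewrite ?mul0r // => _; case: (A _).1; rewrite /= ?expr1 ?expr0 ?mulrNN ?mulr1 ?mul1r.
Qed.

Lemma wprod_spmx ws : wprod n ws = spmx (word_act ws).
Proof.
elim: ws => [|i ws IH] /=; first by rewrite -spmx_id; apply: eq_spmx.
rewrite IH sgen_spmx mul_spmx //; first by move=> b b_lt; apply: word_act_row_lt.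
exact: sgen_act_flip.
Qed.

Lemma spmx_inj A B b : spmx A = spmx B -> (b < n)%N -> ((A (false, b)).2 < n)%N ->
  A (false, b) = B (false, b).
Proof.
move=> eAB b_lt r_lt; move/matrixP/(_ (Ordinal r_lt) (Ordinal b_lt)): eAB.
rewrite !mxE /= eqxx; case: (A _) => [s r]; case: (B _) => [t r'] /=.
case: eqP => [-> /signr_inj -> //|_ /eqP]; by rewrite signr_eq0.
Qed.

Lemma wprod_inj ws1 ws2 b : wprod n ws1 = wprod n ws2 -> (b < n)%N ->
  word_col ws1 b = word_col ws2 b.
Proof. by rewrite !wprod_spmx => e b_lt; apply: (spmx_inj e b_lt); apply: word_act_row_lt. Qed.

End SignedPermutationMatrices.

Section Words.
Variable n : nat.

Definition theta_word := iota 1 n ++ rev (iota 1 n.-1).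

Definition W_part (ws : seq nat) : seq nat :=
  flatten [seq (if i == 0%N then theta_word else [:: i]) | i <- ws].

Definition rho_word (i : nat) := W_part (rev (iota 0 i)).

Definition v_word (lam : seq nat) := flatten (map rho_word (rev lam)).

Definition u_word (lam : seq nat) := flatten [seq iota x (n.+1 - x) | x <- lam].

Lemma wprod_cat ws1 ws2 : wprod n (ws1 ++ ws2) = (wprod n ws1 *m wprod n ws2)%R.
Proof. by elim: ws1 => [|i ws1 IH] /=; rewrite ?mul1mx // IH mulmxA. Qed.

Lemma afprod_fst ws : (afprod n ws).1 = wprod n (W_part ws).
Proof.
elim: ws => [//|i ws IH] /=; rewrite /W_part /= wprod_cat -/(W_part ws) -IH /afgen.
by case: (i == 0%N); rewrite //= mulmx1.
Qed.

Lemma foldl_mul_wprod (F : nat -> 'M[int]_n) (word : nat -> seq nat) lam (M : 'M[int]_n) :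
  (forall k, F k = wprod n (word k)) ->
  foldl (fun acc k => (F k *m acc)%R) M lam = (wprod n (flatten (map word (rev lam))) *m M)%R.
Proof.
move=> eF; elim: lam M => [|k lam IH] M /=; first by rewrite mul1mx.
by rewrite IH rev_cons -cats1 map_cat flatten_cat wprod_cat /= cats0 eF mulmxA.
Qed.

Lemma v_lam_wprod lam : v_lam n lam = wprod n (v_word lam).
Proof.
have fst_foldl (M : afel n) L : (foldl (fun acc k => afmul (rho n k) acc) M L).1 =
    foldl (fun acc k => ((rho n k).1 *m acc)%R) M.1 L.
  by elim: L M => [|k L IH] M //=; rewrite IH.
rewrite /v_lam /x_lam fst_foldl (foldl_mul_wprod (word := rho_word)) ?mulmx1 //.
by move=> k; rewrite /rho afprod_fst.
Qed.

Lemma u_lam_wprod lam : all (fun k => k <= n)%N lam ->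
  u_lam n (lam_star n lam) = wprod n (u_word lam).
Proof.
move=> lam_le; rewrite /u_lam (foldl_mul_wprod (word := fun k => iota (n.+1 - k) k)) ?mulmx1 //.
rewrite /lam_star -map_rev revK /u_word -map_comp; congr (wprod n (flatten _)).
by apply/eq_in_map => x /(allP lam_le) x_le /=; rewrite subKn //; lia.
Qed.

End Words.

Definition cycle_up (a k j : nat) : nat :=
  if (a.-1 <= j < a + k - 1)%N then j.+1 else if j == (a + k - 1)%N then a.-1 else j.

Definition cycle_down (a k j : nat) : nat :=
  if (a <= j <= a + k - 1)%N then j.-1 else if j == a.-1 then (a + k - 1)%N else j.

Section ExplicitActions.
Variable n : nat.

Lemma word_act_iota a k s j : (1 <= a)%N -> (a + k <= n)%N ->
  word_act n (iota a k) (s, j) = (s, cycle_up a k j).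
Proof.
elim: k a => [|k IH] a a_ge1 ak_le /=; first by rewrite /cycle_up; case_lia.
rewrite IH ?sgen_act_lt_n /cycle_up /=; case_lia.
Qed.

Lemma word_act_rev_iota a k s j : (1 <= a)%N -> (a + k <= n)%N ->
  word_act n (rev (iota a k)) (s, j) = (s, cycle_down a k j).
Proof.
elim: k a j => [|k IH] a j a_ge1 ak_le /=; first by rewrite /cycle_down; case_lia.
rewrite rev_cons -cats1 word_act_cat /= sgen_act_lt_n /=; last lia.
rewrite IH /cycle_down; case_lia.
Qed.

Lemma iota_rcons a k : iota a k.+1 = rcons (iota a k) (a + k)%N.
Proof. by rewrite -addn1 iotaD cats1. Qed.

Lemma word_act_theta s j : (0 < n)%N -> (j < n)%N ->
  word_act n (theta_word n) (s, j) = if j == 0%N then (~~ s, 0%N) else (s, j).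
Proof.
move=> n_gt0 j_lt; rewrite /theta_word word_act_cat word_act_rev_iota; try lia.
have -> : iota 1 n = rcons (iota 1 n.-1) n.
  by rewrite -[in LHS](prednK n_gt0) iota_rcons add1n prednK.
rewrite -cats1 word_act_cat /= sgen_act_n /= word_act_iota /cycle_down /cycle_up; try lia.
case_lia.
Qed.

Lemma W_part_id ws : all (fun i => i != 0%N) ws -> W_part n ws = ws.
Proof.
elim: ws => [//|i ws IH] /= /andP[/negPf i_neq0 ws_neq0].
by rewrite /W_part /= i_neq0 -/(W_part n ws) IH.
Qed.

Definition rho_row (y j : nat) : nat := if j == 0%N then y.-1 else if (j < y)%N then j.-1 else j.

Definition u_row (x j : nat) : nat := if j == n.-1 then x.-1 else if (x.-1 <= j)%N then j.+1 else j.

Lemma word_act_rho y s j : (1 <= y <= n)%N -> (j < n)%N ->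
  word_act n (rho_word n y) (s, j) = (s (+) (j == 0%N), rho_row y j).
Proof.
move=> /andP[y_ge1 y_le] j_lt; rewrite /rho_word.
have -> : rev (iota 0 y) = rev (iota 1 y.-1) ++ [:: 0%N].
  by rewrite -[in LHS](prednK y_ge1) /= rev_cons -cats1.
rewrite /W_part map_cat flatten_cat -/(W_part n _) W_part_id /= ?cats0; last first.
  by rewrite all_rev; apply/allP => i; rewrite mem_iota; lia.
rewrite word_act_cat word_act_theta; try lia.
by case: ifP => j0 /=; rewrite word_act_rev_iota /cycle_down /rho_row; try lia; case_lia.
Qed.

Lemma word_act_u x s j : (1 <= x <= n)%N -> (j < n)%N ->
  word_act n (iota x (n.+1 - x)) (s, j) = (s (+) (j == n.-1), u_row x j).
Proof.
move=> /andP[x_ge1 x_le] j_lt; rewrite subSn // iota_rcons -cats1 word_act_cat /=.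
rewrite subnKC // sgen_act_n /= word_act_iota /cycle_up /u_row; try lia; case_lia.
Qed.

End ExplicitActions.

Section SignedPermutations.
Variable n : nat.
Implicit Types (f sigma : nat -> nat) (g : nat -> sidx) (S : nat -> bool).

Definition row_bij f :=
  [/\ forall b, (b < n)%N -> (f b < n)%N,
      forall b c, (b < n)%N -> (c < n)%N -> f b = f c -> b = c &
      forall r, (r < n)%N -> exists2 b, (b < n)%N & f b = r].

Definition is_sperm g := row_bij (fun b => (g b).2).

Definition sperm_neg S g := is_sperm g /\ forall b, (b < n)%N -> (g b).1 = S (g b).2.

Lemma row_bij_id : row_bij id.
Proof. by split=> // r r_lt; exists r. Qed.

Lemma eq_row_bij f f' : (forall b, (b < n)%N -> f b = f' b) -> row_bij f -> row_bij f'.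
Proof.
move=> eff' [f_lt f_inj f_onto]; split=> [b b_lt|b c b_lt c_lt|r /f_onto[b b_lt <-]].
- by rewrite -eff' ?f_lt.
- by rewrite -!eff' //; apply: f_inj.
- by exists b; rewrite ?eff'.
Qed.

Lemma row_bij_comp f sigma : row_bij f -> row_bij sigma -> row_bij (sigma \o f).
Proof.
move=> [f_lt f_inj f_onto] [s_lt s_inj s_onto]; split=> [b b_lt|b c b_lt c_lt /=|r r_lt].
- exact/s_lt/f_lt.
- by move/s_inj => /(_ (f_lt _ b_lt) (f_lt _ c_lt)); apply: f_inj.
- have [j j_lt <-] := s_onto r r_lt; have [b b_lt <-] := f_onto j j_lt.
  by exists b.
Qed.

Lemma is_sperm_comp g h sigma : is_sperm g -> row_bij sigma ->
  (forall s j, (j < n)%N -> (h (s, j)).2 = sigma j) -> is_sperm (h \o g).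
Proof.
move=> g_sperm s_bij h_row; apply: eq_row_bij (row_bij_comp g_sperm s_bij).
by move=> b b_lt /=; rewrite [g b]surjective_pairing h_row //; case: g_sperm => /(_ b b_lt).
Qed.

Lemma is_sperm_sgen i g : is_sperm g -> is_sperm (sgen_act n i \o g).
Proof.
move=> g_sperm; case: (boolP (0 < i < n)%N) => i_range.
  apply: (is_sperm_comp (sigma := swapn i)) => // [|s j _]; last by rewrite sgen_act_lt_n.
  split=> [j j_lt|j k j_lt k_lt|r r_lt]; last exists (swapn i r); case_lia.
apply: (is_sperm_comp (sigma := id)) => // [|s j _]; first exact: row_bij_id.
by rewrite /sgen_act (negPf i_range); case: ifP.
Qed.

Lemma is_sperm_word ws : is_sperm (word_col n ws).
Proof.
elim: ws => [|i ws IH]; first exact: row_bij_id.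
exact: (is_sperm_sgen i IH).
Qed.

Lemma sperm_neg_comp S S' g h sigma j0 : sperm_neg S g -> row_bij sigma ->
  (forall s j, (j < n)%N -> h (s, j) = (s (+) (j == j0), sigma j)) ->
  (forall j, (j < n)%N -> S' (sigma j) = S j (+) (j == j0)) ->
  sperm_neg S' (h \o g).
Proof.
move=> [g_sperm g_sign] s_bij eh eS'; split.
  by apply: (is_sperm_comp g_sperm s_bij); move=> s j j_lt; rewrite eh.
move=> b b_lt /=; have [/(_ b b_lt) gb_lt _ _] := g_sperm.
by rewrite [g b]surjective_pairing eh //= eS' // g_sign.
Qed.

Lemma sperm_neg_eq S S' g g' : S =1 S' -> g =1 g' -> sperm_neg S g -> sperm_neg S' g'.
Proof.
move=> eS eg [g_sperm g_sign]; split; first by apply: eq_row_bij g_sperm => b _; rewrite eg.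
by move=> b b_lt; rewrite -eS -eg g_sign.
Qed.

Lemma sperm_neg_id : sperm_neg pred0 (word_col n [::]).
Proof. by split=> //; apply: row_bij_id. Qed.

Lemma sperm_neg_u_step x S g : (1 <= x <= n)%N -> (forall r, S r -> (r < x.-1)%N) ->
  sperm_neg S g ->
  sperm_neg (fun r => S r || (r == x.-1)) (word_act n (iota x (n.+1 - x)) \o g).
Proof.
move=> x_range S_lt g_neg.
have S_ge r : (x.-1 <= r)%N -> S r = false by move=> r_ge; apply/negP => /S_lt; lia.
apply: (sperm_neg_comp g_neg (sigma := u_row n x) (j0 := n.-1)) => [|s j j_lt|j j_lt].
- split=> [j j_lt|j k j_lt k_lt|r r_lt];
    last exists (if r == x.-1 then n.-1 else if (x.-1 < r)%N then r.-1 else r);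
    rewrite /u_row; case_lia.
- exact: word_act_u.
rewrite /u_row; case: (j =P n.-1) => [->|ne].
  by rewrite eqxx orbT S_ge //; lia.
rewrite addbF; case: leqP => j_x; first by rewrite !S_ge //; lia.
by rewrite (_ : (j == x.-1) = false) ?orbF //; lia.
Qed.

Lemma sperm_neg_rho_step y S g : (1 <= y <= n)%N -> (forall r, S r -> (y <= r)%N) ->
  sperm_neg S g ->
  sperm_neg (fun r => S r || (r == y.-1)) (word_act n (rho_word n y) \o g).
Proof.
move=> y_range S_ge g_neg.
have S_lt r : (r < y)%N -> S r = false by move=> r_lt; apply/negP => /S_ge; lia.
apply: (sperm_neg_comp g_neg (sigma := rho_row y) (j0 := 0%N)) => [|s j j_lt|j j_lt].
- split=> [j j_lt|j k j_lt k_lt|r r_lt];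
    last exists (if r == y.-1 then 0%N else if (r < y.-1)%N then r.+1 else r);
    rewrite /rho_row; case_lia.
- exact: word_act_rho.
rewrite /rho_row; case: (j =P 0%N) => [->|ne].
  by rewrite eqxx orbT S_lt //; lia.
rewrite addbF; case: ltnP => j_y; first by rewrite !S_lt //; lia.
by rewrite (_ : (j == y.-1) = false) ?orbF //; lia.
Qed.

End SignedPermutations.

Section LengthStatistic.
Variable n : nat.
Implicit Types g : nat -> sidx.

Definition key (x : sidx) : nat := if x.1 then x.2 else (n + n - x.2)%N.

Definition key_sorted g := forall a b, (a < b)%N -> (b < n)%N -> (key (g b) < key (g a))%N.

Lemma key_inj x y : (x.2 < n)%N -> (y.2 < n)%N -> key x = key y -> x = y.
Proof. by case: x => [[] j]; case: y => [[] k] /=; rewrite /key /= => j_lt k_lt e; congr (_, _); lia. Qed.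

Lemma key_sorted_eq g g' : g =1 g' -> key_sorted g -> key_sorted g'.
Proof. by move=> eg g_sorted a b; rewrite -!eg; apply: g_sorted. Qed.

Definition inversions g : nat :=
  \sum_(a < n) \sum_(b < n) ((a < b) && (key (g a) < key (g b))).

Definition nweight (x : sidx) : nat := if x.1 then (n - x.2)%N else 0%N.

Definition nweight_sum g : nat := \sum_(a < n) nweight (g a).

Definition length_stat g : nat := inversions g + nweight_sum g.

Lemma eq_length_stat g g' : (forall b, (b < n)%N -> g b = g' b) -> length_stat g = length_stat g'.
Proof.
move=> eg; congr (_ + _); last by apply: eq_bigr => a _; rewrite eg.
by apply: eq_bigr => a _; apply: eq_bigr => b _; rewrite !eg.
Qed.

Lemma sum_only (F : 'I_n -> nat) (c : 'I_n) : (forall a, a != c -> F a = 0%N) -> \sum_(a < n) F a = F c.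
Proof. by move=> F0; rewrite (bigD1 c) //= big1 ?addn0. Qed.

Lemma sum_only_row g (F : 'I_n -> nat) (c : 'I_n) : is_sperm n g ->
  (forall a : 'I_n, (g a).2 != (g c).2 -> F a = 0%N) -> \sum_(a < n) F a = F c.
Proof.
move=> [_ g_inj _] F0; apply: sum_only => a a_neq_c; apply: F0; apply: contra a_neq_c.
by move=> /eqP e; apply/eqP/val_inj; apply: g_inj (ltn_ord a) (ltn_ord c) e.
Qed.

Lemma double_sum_only (P : 'I_n -> 'I_n -> bool) (p q : 'I_n) :
  (forall a b, P a b -> a = p /\ b = q) -> \sum_(a < n) \sum_(b < n) P a b = P p q.
Proof.
move=> P_pq; rewrite (sum_only (c := p)) => [|a a_neq]; last first.
  by apply: big1 => b _; case: (boolP (P a b)) => // /P_pq [a_p _]; rewrite a_p eqxx in a_neq.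
rewrite (sum_only (c := q)) // => b b_neq.
by case: (boolP (P p b)) => // /P_pq [_ b_q]; rewrite b_q eqxx in b_neq.
Qed.

Definition same_sign_adjacent i (x y : sidx) : bool :=
  (x.1 == y.1) && (((x.2 == i.-1) && (y.2 == i)) || ((x.2 == i) && (y.2 == i.-1))).

Lemma key_lt_sgen_lt i x y : (0 < i < n)%N -> (x.2 < n)%N -> (y.2 < n)%N -> x.2 <> y.2 ->
  (((key (sgen_act n i x) < key (sgen_act n i y)) : nat)
     <= (key x < key y) + same_sign_adjacent i x y)%N.
Proof.
move=> i_range; rewrite !sgen_act_lt_n // /key /same_sign_adjacent /=.
by case: x => [[] j]; case: y => [[] k] /= j_lt k_lt j_neq_k; rewrite ?eqxx /=; case_lia.
Qed.

Lemma key_lt_sgen_n x y : (x.2 < n)%N -> (y.2 < n)%N -> x.2 <> y.2 ->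
  (key (sgen_act n n x) < key (sgen_act n n y)) = (key x < key y).
Proof.
rewrite !sgen_act_n /key; case: x => s j; case: y => t k /= j_lt k_lt j_neq_k.
by case: (j =P n.-1); case: (k =P n.-1); case: s; case: t => /= *; apply/idP/idP; lia.
Qed.

Lemma nweight_sgen_lt i x : (0 < i < n)%N -> (x.2 < n)%N ->
  nweight (sgen_act n i x) + (x.1 && (x.2 == i.-1)) = nweight x + (x.1 && (x.2 == i)).
Proof. by move=> i_range; rewrite sgen_act_lt_n // /nweight; case: x => [[] j] /= j_lt; case_lia. Qed.

Lemma nweight_sgen_n x : (nweight (sgen_act n n x) <= nweight x + (x.2 == n.-1))%N.
Proof. by rewrite sgen_act_n /nweight; case: x => [s j] /=; case: (j =P n.-1); case: s => /=; lia. Qed.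

Lemma col_of_row g r : is_sperm n g -> (r < n)%N -> exists A : 'I_n, (g A).2 = r.
Proof. by case=> _ _ onto /onto[A A_lt eA]; exists (Ordinal A_lt). Qed.

Lemma sum_at_row g r : is_sperm n g -> (r < n)%N -> \sum_(a < n) ((g a).2 == r) = 1.
Proof.
move=> g_sperm /(col_of_row g_sperm)[C eC].
by rewrite (sum_only_row g_sperm (c := C)) ?eC ?eqxx // => a /negPf ->.
Qed.

Lemma inversions_sgen_lt i g : (0 < i < n)%N -> is_sperm n g ->
  (inversions (sgen_act n i \o g) <=
   inversions g + \sum_(a < n) \sum_(b < n) ((a < b) && same_sign_adjacent i (g a) (g b)))%N.
Proof.
move=> i_range [g_lt g_inj _]; rewrite -big_split /=; apply: leq_sum => a _.
rewrite -big_split /=; apply: leq_sum => b _; case: ltnP => //= a_lt_b.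
apply: key_lt_sgen_lt; rewrite ?g_lt // => e.
by move: (g_inj _ _ (ltn_ord a) (ltn_ord b) e) a_lt_b => ->; rewrite ltnn.
Qed.

Lemma same_sign_adjacent_pairs i g (A B : 'I_n) : (0 < i)%N -> is_sperm n g ->
  (g A).2 = i.-1 -> (g B).2 = i ->
  (\sum_(a < n) \sum_(b < n) ((a < b) && same_sign_adjacent i (g a) (g b))
     <= ((g A).1 == (g B).1))%N.
Proof.
move=> i_gt0 [_ g_inj _] eA eB.
have col_eq (a c : 'I_n) : (g a).2 = (g c).2 -> a = c.
  by move=> e; apply: val_inj; apply: g_inj (ltn_ord a) (ltn_ord c) e.
set p := if (A < B)%N then A else B; set q := if (A < B)%N then B else A.
have pairs_pq (a b : 'I_n) : (a < b) && same_sign_adjacent i (g a) (g b) -> a = p /\ b = q.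
  case/andP => a_lt_b /andP[_ /orP[]/andP[/eqP ea /eqP eb]].
  - have [a_A b_B] : a = A /\ b = B by split; apply: col_eq; rewrite ?ea ?eb ?eA ?eB.
    by rewrite /p /q -a_A -b_B a_lt_b.
  - have [a_B b_A] : a = B /\ b = A by split; apply: col_eq; rewrite ?ea ?eb ?eA ?eB.
    by rewrite /p /q -a_B -b_A ltnNge (ltnW a_lt_b).
rewrite (double_sum_only pairs_pq); case: (boolP (_ && _)) => //= /andP[_ /andP[/eqP same _]].
by move: same; rewrite /p /q; case: ifP => _ ->; rewrite eqxx.
Qed.

Lemma nweight_sum_sgen_lt i g (A B : 'I_n) : (0 < i < n)%N -> is_sperm n g ->
  (g A).2 = i.-1 -> (g B).2 = i ->
  nweight_sum (sgen_act n i \o g) + (g A).1 = nweight_sum g + (g B).1.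
Proof.
move=> i_range g_sperm eA eB.
have neg_at (C : 'I_n) r : (g C).2 = r ->
    (g C).1 = \sum_(a < n) ((g a).1 && ((g a).2 == r)) :> nat.
  by move=> eC; rewrite (sum_only_row g_sperm (c := C)) ?eC ?eqxx ?andbT // => a /negPf ->; rewrite andbF.
rewrite (neg_at A _ eA) (neg_at B _ eB) -!big_split /=; apply: eq_bigr => a _.
by apply: nweight_sgen_lt => //; case: g_sperm => /(_ a (ltn_ord a)).
Qed.

Lemma inversions_sgen_n g : is_sperm n g -> inversions (sgen_act n n \o g) = inversions g.
Proof.
move=> [g_lt g_inj _]; apply: eq_bigr => a _; apply: eq_bigr => b _ /=.
case: ltnP => //= a_lt_b; rewrite key_lt_sgen_n ?g_lt // => e.
by move: (g_inj _ _ (ltn_ord a) (ltn_ord b) e) a_lt_b => ->; rewrite ltnn.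
Qed.

Lemma nweight_sum_sgen_n g : (0 < n)%N -> is_sperm n g ->
  (nweight_sum (sgen_act n n \o g) <= (nweight_sum g).+1)%N.
Proof.
move=> n_gt0 g_sperm; rewrite -addn1 -(sum_at_row g_sperm (r := n.-1)) -?big_split /=; last lia.
by apply: leq_sum => a _; apply: nweight_sgen_n.
Qed.

Lemma length_stat_sgen i g : (0 < i <= n)%N -> is_sperm n g ->
  (length_stat (sgen_act n i \o g) <= (length_stat g).+1)%N.
Proof.
move=> i_range g_sperm; rewrite /length_stat; case: (ltnP i n) => [i_lt | i_ge]; last first.
  have -> : i = n by lia.
  have n_gt0 : (0 < n)%N by lia.
  by rewrite inversions_sgen_n //; have := nweight_sum_sgen_n n_gt0 g_sperm; lia.
have [A eA] : exists A : 'I_n, (g A).2 = i.-1 by apply: col_of_row g_sperm _; lia.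
have [B eB] := col_of_row g_sperm i_lt.
have i_range' : (0 < i < n)%N by lia.
have := inversions_sgen_lt i_range' g_sperm; have := nweight_sum_sgen_lt i_range' g_sperm eA eB.
have := same_sign_adjacent_pairs (proj1 (andP i_range)) g_sperm eA eB.
by case: (g A).1; case: (g B).1 => /=; lia.
Qed.

Lemma length_stat_word ws : W_word n ws -> (length_stat (word_col n ws) <= size ws)%N.
Proof.
elim: ws => [_|i ws IH /andP[i_range ws_word]] /=.
  rewrite /length_stat /inversions /nweight_sum big1 ?big1 // => a _.
  by apply: big1 => b _; rewrite /key /=; case: ltnP => //= a_lt_b; lia.
by apply: leq_trans (length_stat_sgen i_range (is_sperm_word n ws)) _; rewrite ltnS IH.
Qed.

Lemma length_W_wprod ws : W_word n ws -> exists k, length_W (wprod n ws) k.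
Proof.
move=> ws_W; pose P k := exists2 ws', W_word n ws' & size ws' = k /\ wprod n ws' = wprod n ws.
have [k [[P_k k_min] _]] := dec_inh_nat_subset_has_unique_least_element P (fun k => classic (P k))
  (ex_intro _ (size ws) (ex_intro2 _ _ ws ws_W (conj erefl erefl))).
exists k; split=> // ws' ws'_W e; apply/leP/k_min.
by exists ws'.
Qed.

Lemma length_stat_le_length ws k :
  length_W (wprod n ws) k -> (length_stat (word_col n ws) <= k)%N.
Proof.
case=> [[ws' ws'_W [<- e]] _].
rewrite (@eq_length_stat _ (word_col n ws')); first exact: length_stat_word.
by move=> b b_lt; apply: wprod_inj.
Qed.

End LengthStatistic.

Section UVWords.
Variable n : nat.
Implicit Types (g : nat -> sidx) (S : nat -> bool).

(* The positive rows x-1, ..., n-2 are shifted together to x, ..., n-1, and the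
   positive row n-1, of least positive key, becomes -eps_x, of greatest
   negative key. *)
Lemma key_sorted_u_step x S g : (1 <= x <= n)%N -> (forall r, S r -> (r < x.-1)%N) ->
  sperm_neg n S g -> key_sorted n g -> key_sorted n (word_act n (iota x (n.+1 - x)) \o g).
Proof.
move=> x_range S_lt [[g_lt g_inj _] g_sign] g_sorted a b a_lt_b b_lt /=.
have a_lt : (a < n)%N by lia.
have := g_sorted a b a_lt_b b_lt; have := g_inj a b a_lt b_lt.
have := S_lt (g a).2; have := S_lt (g b).2; have := g_sign a a_lt; have := g_sign b b_lt.
have := g_lt a a_lt; have := g_lt b b_lt.
case: (g a) => s j; case: (g b) => t k /= k_lt j_lt -> -> Sk Sj ab_inj.
have {ab_inj} j_neq_k : j <> k by move=> e; have := ab_inj e; lia.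
rewrite !word_act_u // /u_row /key.
case: (S j) Sj; case: (S k) Sk => /= Sk Sj; try have := Sk erefl; try have := Sj erefl;
  case_lia.
Qed.

Lemma nweight_sum_u_step x S g : (1 <= x <= n)%N -> (forall r, S r -> (r < x.-1)%N) ->
  sperm_neg n S g ->
  nweight_sum n (word_act n (iota x (n.+1 - x)) \o g) = nweight_sum n g + (n.+1 - x).
Proof.
move=> x_range S_lt [g_sperm g_sign].
have S_ge r : (x.-1 <= r)%N -> S r = false by move=> r_ge; apply/negP => /S_lt; lia.
have -> : nweight_sum n g + (n.+1 - x) =
    \sum_(a < n) (nweight n (g a) + ((g a).2 == n.-1) * (n.+1 - x)).
  by rewrite big_split -big_distrl /= sum_at_row ?mul1n //; lia.
apply: eq_bigr => a _ /=.
have ga_lt : ((g a).2 < n)%N by case: g_sperm => /(_ a (ltn_ord a)).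
move: ga_lt (g_sign a (ltn_ord a)); case: (g a) => s j /= j_lt ->; rewrite word_act_u // /u_row /nweight /=.
case: (j =P n.-1) => [->|_]; first by rewrite S_ge /=; lia.
by rewrite addbF mul0n addn0; case: leqP => // j_x; rewrite S_ge.
Qed.

Lemma strict_part_cons x xs : strict_part n (x :: xs) ->
  [/\ (1 <= x <= n)%N, all (fun y => y < x)%N xs & strict_part n xs].
Proof.
case/andP => xs_path /andP[x_range xs_range]; split=> //.
  by apply: order_path_min xs_path => a b c; lia.
by rewrite /strict_part (path_sorted xs_path).
Qed.

Lemma strict_part_rcons ys y : strict_part n (rcons ys y) ->
  [/\ (1 <= y <= n)%N, all (fun z => y < z)%N ys & strict_part n ys].
Proof.
have lt_trans : transitive (fun a b => b < a)%N by move=> a b c; lia.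
rewrite /strict_part -cats1 all_cat /= andbT !sorted_pairwise // pairwise_cat /=.
by case/andP=> /and3P[ys_gt ys_pw _] /andP[ys_range y_range]; rewrite ys_pw ys_range; split=> //;
  apply/allP => z /(allrelP ys_gt z y)/(_ (mem_head y [::])).
Qed.

Lemma u_word_props lam : strict_part n lam ->
  [/\ sperm_neg n (fun r => r.+1 \in lam) (word_col n (u_word n lam)),
      key_sorted n (word_col n (u_word n lam)) &
      nweight_sum n (word_col n (u_word n lam)) = size (u_word n lam)].
Proof.
elim: lam => [_|x xs IH /strict_part_cons[x_range xs_lt /IH[xs_neg xs_sorted xs_weight]]].
  by split; [exact: sperm_neg_id | move=> a b; rewrite /key /=; lia | apply: big1].
have S_lt r : r.+1 \in xs -> (r < x.-1)%N by move/(allP xs_lt); lia.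
have e_col : word_act n (iota x (n.+1 - x)) \o word_col n (u_word n xs) =1 word_col n (u_word n (x :: xs)).
  by move=> b; rewrite /word_col /= word_act_cat.
split.
- apply: sperm_neg_eq e_col (sperm_neg_u_step x_range S_lt xs_neg) => r.
  by rewrite in_cons orbC; congr (_ || _); apply/eqP/eqP; lia.
- exact: key_sorted_eq e_col (key_sorted_u_step x_range S_lt xs_neg xs_sorted).
- have -> : nweight_sum n (word_col n (u_word n (x :: xs))) =
      nweight_sum n (word_act n (iota x (n.+1 - x)) \o word_col n (u_word n xs)).
    by apply: eq_bigr => a _; rewrite e_col.
  by rewrite (nweight_sum_u_step x_range S_lt xs_neg) xs_weight size_cat size_iota addnC.
Qed.

Lemma v_word_sperm_neg lam : strict_part n lam ->
  sperm_neg n (fun r => r.+1 \in lam) (word_col n (v_word n lam)).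
Proof.
elim/last_ind: lam => [_|ys y IH /strict_part_rcons[y_range ys_gt /IH ys_neg]].
  exact: sperm_neg_id.
have S_ge r : r.+1 \in ys -> (y <= r)%N by move/(allP ys_gt); lia.
apply: sperm_neg_eq (sperm_neg_rho_step y_range S_ge ys_neg) => [r|b].
  by rewrite mem_rcons in_cons orbC; congr (_ || _); apply/eqP/eqP; lia.
by rewrite /word_col /v_word rev_rcons /= word_act_cat.
Qed.

End UVWords.

Section Cosets.
Variable n : nat.
Implicit Types (g : nat -> sidx) (S : nat -> bool).

Lemma word_col_WP ws b : all (fun i => 0 < i < n)%N ws -> (word_col n ws b).1 = false.
Proof. by elim: ws => [//|i ws IH] /andP[i_range ws_P] /=; rewrite sgen_act_lt_n // IH. Qed.

(* Induction on k: with p = pi k, the cycle s_(p+1) ... s_k sends row k to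
   row p, so pi is this cycle composed with a permutation fixing k, ..., n-1. *)
Lemma WP_word_of_perm k pi : (k <= n)%N ->
  (forall b, (b < n)%N -> (pi b < n)%N) ->
  (forall b c, (b < n)%N -> (c < n)%N -> pi b = pi c -> b = c) ->
  (forall b, (k <= b < n)%N -> pi b = b) ->
  exists2 ws, all (fun i => 0 < i < n)%N ws &
    forall b, (b < n)%N -> word_col n ws b = (false, pi b).
Proof.
elim: k pi => [|k IH] pi k_le pi_lt pi_inj pi_id.
  by exists [::] => // b b_lt; rewrite /word_col /= pi_id.
set p := pi k.
have p_lt : (p < n)%N by apply: pi_lt; lia.
have p_le : (p <= k)%N.
  rewrite leqNgt; apply/negP => k_lt_p.
  by have := pi_inj p k ltac:(lia) ltac:(lia) (pi_id p ltac:(lia)); lia.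
set pi' := fun b => cycle_down p.+1 (k - p) (pi b).
have [ws ws_P e_ws] : exists2 ws, all (fun i => 0 < i < n)%N ws &
    forall b, (b < n)%N -> word_col n ws b = (false, pi' b).
  apply: IH => [|b b_lt|b c b_lt c_lt|b /andP[k_b b_lt]]; first lia.
  - by have := pi_lt b b_lt; rewrite /pi' /cycle_down; case_lia.
  - by rewrite /pi' /cycle_down => e; apply: pi_inj => //; move: e; case_lia.
  - rewrite /pi' /cycle_down; case: (b =P k) => [->|b_neq_k]; first by rewrite -/p; case_lia.
    by rewrite pi_id; [case_lia | lia].
exists (iota p.+1 (k - p) ++ ws).
  by rewrite all_cat ws_P andbT; apply/allP => i; rewrite mem_iota; lia.
move=> b b_lt; rewrite /word_col word_act_cat -/(word_col n ws b) e_ws // word_act_iota; try lia.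
by have pib_lt := pi_lt b b_lt; rewrite /pi' /cycle_up /cycle_down; case_lia.
Qed.

Lemma coset_word S g g' : sperm_neg n S g -> sperm_neg n S g' ->
  exists2 ws, all (fun i => 0 < i < n)%N ws &
    forall b, (b < n)%N -> g' b = g (word_col n ws b).2.
Proof.
move=> [[g_lt g_inj g_onto] g_sign] [[g'_lt g'_inj g'_onto] g'_sign].
pose pi b := if [pick c : 'I_n | (g c).2 == (g' b).2] is Some c then val c else 0%N.
have pi_spec b : (b < n)%N -> (pi b < n)%N /\ (g (pi b)).2 = (g' b).2.
  move=> b_lt; rewrite /pi; case: pickP => [c /eqP e|none]; first by split; [exact: ltn_ord|].
  have [c c_lt e] := g_onto _ (g'_lt b b_lt).
  by have := none (Ordinal c_lt); rewrite /= e eqxx.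
have [ws ws_P e_ws] : exists2 ws, all (fun i => 0 < i < n)%N ws &
    forall b, (b < n)%N -> word_col n ws b = (false, pi b).
  apply: (@WP_word_of_perm n) => // [b /pi_spec[]//|b c b_lt c_lt e|b]; last lia.
  by apply: g'_inj => //; rewrite -(pi_spec b b_lt).2 -(pi_spec c c_lt).2 e.
exists ws => // b b_lt; rewrite e_ws //=; have [pi_lt e_row] := pi_spec b b_lt.
by rewrite [g' b]surjective_pairing [g (pi b)]surjective_pairing g_sign // g'_sign // e_row.
Qed.

Lemma sperm_neg_WP S g ws : sperm_neg n S g -> all (fun i => 0 < i < n)%N ws ->
  sperm_neg n S (g \o snd \o word_col n ws).
Proof.
move=> [g_sperm g_sign] ws_P; split; last by move=> b b_lt; apply: g_sign; apply: word_act_row_lt.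
exact: row_bij_comp (is_sperm_word n ws) g_sperm.
Qed.

Lemma nweight_sum_sperm_neg S g : sperm_neg n S g ->
  nweight_sum n g = \sum_(r < n) nweight n (S r, val r).
Proof.
move=> [[g_lt g_inj _] g_sign].
pose row (a : 'I_n) : 'I_n := Ordinal (g_lt a (ltn_ord a)).
have row_inj : injective row.
  by move=> a b /(congr1 val) /= e; apply/val_inj/(g_inj _ _ (ltn_ord a) (ltn_ord b) e).
rewrite (reindex_inj row_inj); apply: eq_bigr => a _ /=.
by rewrite [g a]surjective_pairing g_sign.
Qed.

Lemma key_sorted_unique S g g' : sperm_neg n S g -> sperm_neg n S g' ->
  key_sorted n g -> key_sorted n g' -> forall b, (b < n)%N -> g b = g' b.
Proof.
set keys := fun g => [seq key n (g b) | b <- iota 0 n].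
have keys_sorted h : key_sorted n h -> sorted (fun x y => y < x)%N (keys h).
  move=> h_sorted; rewrite sorted_map.
  apply: (sub_in_sorted _ (allss _) (iota_ltn_sorted 0 n)) => a b _.
  by rewrite mem_iota => /andP[_ b_lt] a_lt_b; apply: h_sorted.
have keys_sub h h' x : sperm_neg n S h -> sperm_neg n S h' -> x \in keys h -> x \in keys h'.
  move=> [[h_lt _ _] h_sign] [[h'_lt _ h'_onto] h'_sign] /mapP[b]; rewrite mem_iota /= => b_lt ->.
  have [c c_lt e] := h'_onto _ (h_lt b b_lt); apply/mapP; exists c; first by rewrite mem_iota.
  by rewrite [h b]surjective_pairing [h' c]surjective_pairing h_sign // h'_sign // e.
move=> g_neg g'_neg g_sorted g'_sorted b b_lt.
have e_keys : keys g = keys g'.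
  apply: (irr_sorted_eq (leT := fun x y => y < x)%N) => [a c d|a|||x]; try lia;
    [exact: keys_sorted | exact: keys_sorted | apply/idP/idP; exact: keys_sub].
have := congr1 (fun s => nth 0%N s b) e_keys.
rewrite /keys !(nth_map 0%N) ?size_iota // nth_iota // add0n.
by case: g_neg => [[g_lt _ _] _]; case: g'_neg => [[g'_lt _ _] _]; apply: key_inj; auto.
Qed.

Lemma inversions_eq0_sorted g : is_sperm n g -> inversions n g = 0%N -> key_sorted n g.
Proof.
move=> [g_lt g_inj _] inv0 a b a_lt_b b_lt; have a_lt : (a < n)%N by lia.
rewrite ltnNge leq_eqVlt; apply/negP => /orP[/eqP e|key_lt].
  by have := g_inj a b a_lt b_lt (congr1 snd (key_inj (g_lt a a_lt) (g_lt b b_lt) e)); lia.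
suff : (((Ordinal a_lt < Ordinal b_lt) && (key n (g a) < key n (g b))) : nat) <= inversions n g.
  by rewrite inv0 /= a_lt_b key_lt.
by rewrite /inversions (bigD1 (Ordinal a_lt)) //= (bigD1 (Ordinal b_lt)) //=; lia.
Qed.

End Cosets.

Section MinimalCosetRepresentative.
Variables (n : nat) (S : nat -> bool) (vw uw : seq nat).
Hypotheses (uw_W : W_word n uw) (v_neg : sperm_neg n S (word_col n vw))
  (u_neg : sperm_neg n S (word_col n uw)) (u_sorted : key_sorted n (word_col n uw))
  (u_weight : nweight_sum n (word_col n uw) = size uw).

Lemma word_col_cat_WP ws : all (fun i => 0 < i < n)%N ws ->
  word_col n (vw ++ ws) =1 word_col n vw \o snd \o word_col n ws.
Proof.
move=> ws_P b; rewrite /word_col word_act_cat /=.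
by rewrite [word_act n ws _]surjective_pairing -/(word_col n ws b) word_col_WP.
Qed.

Lemma coset_length_gt ws : all (fun i => 0 < i < n)%N ws ->
  wprod n (vw ++ ws) <> wprod n uw ->
  forall lu lw, length_W (wprod n uw) lu -> length_W (wprod n (vw ++ ws)) lw -> (lu < lw)%N.
Proof.
move=> ws_P w_neq_u lu lw [_ lu_min] lw_len.
have w_neg : sperm_neg n S (word_col n (vw ++ ws)).
  exact: sperm_neg_eq (fun r => erefl) (fsym (word_col_cat_WP ws_P)) (sperm_neg_WP v_neg ws_P).
have w_weight : nweight_sum n (word_col n (vw ++ ws)) = size uw.
  by rewrite -u_weight (nweight_sum_sperm_neg w_neg) (nweight_sum_sperm_neg u_neg).
have w_inv : (0 < inversions n (word_col n (vw ++ ws)))%N.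
  rewrite lt0n; apply/eqP => /(inversions_eq0_sorted (proj1 w_neg)) w_sorted; apply: w_neq_u.
  rewrite !wprod_spmx; apply: eq_spmx => b b_lt.
  exact: key_sorted_unique w_neg u_neg w_sorted u_sorted b b_lt.
have := lu_min uw uw_W erefl; have := length_stat_le_length lw_len.
by rewrite /length_stat w_weight; lia.
Qed.

Lemma min_coset_rep_sorted : min_coset_rep (wprod n vw) (wprod n uw).
Proof.
have [ws ws_P u_col] := coset_word v_neg u_neg.
have u_coset : wprod n uw = wprod n (vw ++ ws).
  rewrite !wprod_spmx; apply: eq_spmx => b b_lt.
  by rewrite -/(word_col n uw b) -/(word_col n _ b) word_col_cat_WP // u_col.
split; first by exists ws; rewrite // u_coset wprod_cat.
split; first exact: length_W_wprod.
move=> _ [ws' ws'_P ->]; rewrite -wprod_cat => w_neq_u.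
exact: coset_length_gt.
Qed.

End MinimalCosetRepresentative.

Theorem proposition3p6 (n : nat) (lam : seq nat) :
  strict_part n lam -> min_coset_rep (v_lam n lam) (u_lam n (lam_star n lam)).
Proof.
move=> lam_part; have [u_neg u_sorted u_weight] := u_word_props lam_part.
have /allP lam_range := proj2 (andP lam_part).
rewrite v_lam_wprod u_lam_wprod; last by apply/allP => k /lam_range /andP[].
apply: min_coset_rep_sorted u_neg u_sorted u_weight => //; last exact: v_word_sperm_neg.
by apply/allP => i /flatten_mapP[x /lam_range x_range]; rewrite mem_iota; lia.
Qed.
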